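(* Let $(T,X)$ be an unbounded M-flow, where $T$ is a Hausdorff topological group and $X$ a Hausdorff uniform space (not necessarily compact). Then $(T,X)$ is sensitive to initial conditions on $X$.
   Context: $\mathscr U_X$ is a compatible symmetric uniformity of $X$, $\varepsilon[A]=\{y:\exists a\in A,(a,y)\in\varepsilon\}$. $A\subseteq T$ is syndetic if there is compact $K\subseteq T$ with $Kt\cap A\ne\emptyset$ for all $t$. A point $x$ is a.p. if $\{t:tx\in U\}$ is syndetic for every neighborhood $U$ of $x$. The flow is topologically transitive if $\{t:V\cap tU\ne\emptyset\}\ne\emptyset$ for all nonempty open $U,V$; it is an M-flow if it is topologically transitive and its a.p. points are dense. $(T,X)$ is bounded if for every $\alpha\in\mathscr U_X$ there exist $x_0\in X$ and compact $K\subseteq T$ with $\alpha[Kx_0]=X$; otherwise it is unbounded. $(T,X)$ is sensitive to initial conditions on $X$ if there is $\varepsilon\in\mathscr U_X$ such that for every $x\in X$ and every neighborhood $U$ of $x$ there exist $y\in U$ and $t\in T$ with $(tx,ty)\notin\varepsilon$. *)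

From HB Require Import structures.
From mathcomp Require Import all_boot all_order all_algebra.
From mathcomp Require Import all_classical all_reals topology.
Set Implicit Arguments. Unset Strict Implicit. Unset Printing Implicit Defensive.
Import Order.TTheory GRing.Theory Num.Theory.
Local Open Scope classical_set_scope.

Definition topological_group (T : topologicalType)
  (mul : T -> T -> T) (inv : T -> T) (e : T) : Prop :=
  [/\ (forall a b c, mul a (mul b c) = mul (mul a b) c),
      (forall a, mul e a = a /\ mul a e = a),
      (forall a, mul (inv a) a = e /\ mul a (inv a) = e),
      continuous (fun p : T * T => mul p.1 p.2)
    & continuous inv].

Definition is_flow (T : topologicalType) (X : topologicalType)
  (mul : T -> T -> T) (e : T) (act : T -> X -> X) : Prop :=
  [/\ continuous (fun p : T * X => act p.1 p.2),
      (forall x, act e x = x)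
    & (forall s t x, act (mul s t) x = act s (act t x))].

Definition ent_image (X : Type) (eps : set (X * X)) (A : set X) : set X :=
  [set y | exists2 a, A a & eps (a, y)].

Definition syndetic (T : topologicalType) (mul : T -> T -> T) (A : set T) :=
  exists K : set T, compact K /\
    forall t, exists2 k, K k & A (mul k t).

Definition ap_point (T X : topologicalType) (mul : T -> T -> T)
  (act : T -> X -> X) (x : X) :=
  forall U, nbhs x U -> syndetic mul [set t | U (act t x)].

Definition top_transitive (T X : topologicalType) (act : T -> X -> X) :=
  forall U V : set X, open U -> open V -> U !=set0 -> V !=set0 ->
    exists t, V `&` (act t @` U) !=set0.

Definition M_flow (T X : topologicalType) (mul : T -> T -> T)
  (act : T -> X -> X) :=
  top_transitive act /\ dense [set x | ap_point mul act x].

Definition bounded_flow (T : topologicalType) (X : uniformType)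
  (act : T -> X -> X) :=
  forall alpha, entourage alpha ->
    exists x0 : X, exists K : set T, compact K /\
      ent_image alpha [set act k x0 | k in K] = setT.

Definition sensitive (T : topologicalType) (X : uniformType)
  (act : T -> X -> X) :=
  exists2 eps, entourage eps &
    forall (x : X) U, nbhs x U ->
      exists y, exists t, U y /\ ~ eps (act t x, act t y).

From mathcomp Require Import all_boot all_order all_algebra.
From mathcomp Require Import all_classical all_reals topology.
From Stdlib Require Import Classical.
Local Open Scope classical_set_scope.

(* Suppose (T,X) is not sensitive and let alpha be an entourage.  Choose a
   symmetric entourage beta such that every beta-chain of length five lies
   in alpha (entourage_chain5).  Failure of sensitivity for beta yields a
   point x with a neighbourhood U whose whole orbit stays beta-close to the
   orbit of x (not_sensitive_stable).  By density of almost periodic points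
   there is an a.p. point p in the interior of U; its return times to that
   interior are syndetic, with compact witness K.  Using topological
   transitivity, every z in X is then alpha-close to some k^-1 p with k in
   K (stable_returns_cover), so alpha[K^-1 p] = X, where K^-1 is compact by
   continuity of the inversion.  Hence the flow is bounded.  Only the
   algebraic group and action laws, continuity of inversion, transitivity
   and density of a.p. points are needed. *)

Lemma entourage_chain5 {X : uniformType} {alpha : set (X * X)} :
  entourage alpha ->
  exists beta : set (X * X), [/\ entourage beta,
    (forall a b, beta (a, b) -> beta (b, a)) &
    (forall a b c d f g, beta (a, b) -> beta (b, c) -> beta (c, d) ->
       beta (d, f) -> beta (f, g) -> alpha (a, g))].
Proof.
move=> ealpha.
have esplit1 := entourage_split_ent ealpha.
have esplit2 := entourage_split_ent esplit1.
have esplit3 := entourage_split_ent esplit2.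
exists (split_ent (split_ent (split_ent alpha)) `&`
        (split_ent (split_ent (split_ent alpha)))^-1%relation).
split; first exact: entourage_invI.
  by move=> a b [ab ba].
move=> a b c d f g [ab _] [bc _] [cd _] [df _] [fg _].
apply: (entourage_split f) => //.
  apply: (entourage_split c) => //.
    exact: (entourage_split b).
  exact: (entourage_split d).
by do 2 apply: split_ent_subset => //.
Qed.

Lemma not_sensitive_stable {T : topologicalType} {X : uniformType}
    {act : T -> X -> X} {eps : set (X * X)} :
  ~ sensitive act -> entourage eps ->
  exists x, exists U, nbhs x U /\
    forall y t, U y -> eps (act t x, act t y).
Proof.
move=> insensitive eeps; apply: NNPP => nostable.
apply: insensitive; exists eps => // x U Ux; apply: NNPP => noescape.
apply: nostable; exists x, U; split => // y t Uy.
by apply: NNPP => far; apply: noescape; exists y, t.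
Qed.

Section StableReturns.
Context {T : topologicalType} {X : uniformType}.
Context {mul : T -> T -> T} {inv : T -> T} {e : T} {act : T -> X -> X}.
Hypothesis mulA : forall a b c, mul a (mul b c) = mul (mul a b) c.
Hypothesis mul1g : forall a, mul e a = a.
Hypothesis mulVg : forall a, mul (inv a) a = e.
Hypothesis actM : forall s t x, act (mul s t) x = act s (act t x).

Lemma act_inv_return (k t : T) (p : X) :
  act (inv k) (act (mul k t) p) = act t p.
Proof. by rewrite -actM mulA mulVg mul1g. Qed.

(* For any
   z, transitivity moves some y in U near z at a time t, and some k in K
   returns k t p to U; stability at x then links k^-1 p to z by a chain of
   five beta-steps:  k^-1 p, k^-1 x, t p, t x, t y, z. *)
Lemma stable_returns_cover {alpha beta : set (X * X)} {U : set X}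
    {K : set T} {x p : X} :
  top_transitive act -> entourage beta ->
  (forall a b, beta (a, b) -> beta (b, a)) ->
  (forall a b c d f g, beta (a, b) -> beta (b, c) -> beta (c, d) ->
     beta (d, f) -> beta (f, g) -> alpha (a, g)) ->
  open U -> U x -> U p ->
  (forall y t, U y -> beta (act t x, act t y)) ->
  (forall t, exists2 k, K k & U (act (mul k t) p)) ->
  ent_image alpha [set act k p | k in inv @` K] = setT.
Proof.
move=> transitive ebeta beta_sym chain oU Ux Up stable returns.
apply/seteqP; split => // z _.
have nbhs_z := nbhs_interior (nbhs_entourage z ebeta).
have [t [w [Vw [y Uy tyw]]]] :=
  transitive U _ oU (open_interior _) (ex_intro _ x Ux)
    (ex_intro _ z (nbhs_singleton nbhs_z)).
have near_z : beta (z, act t y).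
  by rewrite tyw; have /xsectionP := interior_subset Vw.
have [k Kk Ukt] := returns t.
have back_k := stable (act (mul k t) p) (inv k) Ukt.
rewrite act_inv_return in back_k.
exists (act (inv k) p); first by exists (inv k) => //; exists k.
apply: (chain _ (act (inv k) x) (act t p) (act t x) (act t y)).
- exact/beta_sym/stable.
- exact: back_k.
- exact/beta_sym/stable.
- exact: stable.
- exact: beta_sym.
Qed.

End StableReturns.

Theorem theorem4 (T : topologicalType) (X : uniformType)
  (mul : T -> T -> T) (inv : T -> T) (e : T) (act : T -> X -> X) :
  topological_group mul inv e ->
  hausdorff_space T ->
  hausdorff_space X ->
  is_flow mul e act ->
  M_flow mul act ->
  ~ bounded_flow act ->
  sensitive act.
Proof.
move=> [mulA mul1 mulV _ inv_cont] _ _ [_ _ actM] [transitive ap_dense].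
move=> unbounded; apply: NNPP => insensitive; apply: unbounded => alpha ealpha.
have [beta [ebeta beta_sym chain]] := entourage_chain5 ealpha.
have [x [U [Ux stable]]] := not_sensitive_stable insensitive ebeta.
have Uox : interior U x := nbhs_singleton (nbhs_interior Ux).
have [p [Uop ap_p]] : interior U `&` [set q | ap_point mul act q] !=set0.
  by apply: ap_dense; [exists x | exact: open_interior].
have [K [cK returns]] : syndetic mul [set s | interior U (act s p)].
  by apply: ap_p; apply: open_nbhs_nbhs; split => //; exact: open_interior.
exists p, (inv @` K); split.
  by apply: continuous_compact => //; exact: continuous_subspaceT.
have mul1g a : mul e a = a by case: (mul1 a).
have mulVg a : mul (inv a) a = e by case: (mulV a).
apply: (stable_returns_cover mulA mul1g mulVg actM transitive ebeta beta_sym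
          chain (open_interior U) Uox Uop _ returns).
by move=> y t /interior_subset; exact: stable.
Qed.
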